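(* Let $\alpha,\beta,\gamma\in\mathbb{Z}_2^n$ and $a,b\in\mathbb{Z}_2$, and let $\omega=\omega(\alpha,\beta,\gamma)$. Then $\mathrm{padp}_{a,b}(\alpha,\beta,\gamma)=0$ if and only if $\omega$ satisfies at least one pattern in the list $Q_{a,b}$, where: $Q_{0,0}$: [.*d0*], [6$\hat6$*7.*], [7$\hat7$*6.*], [7$\hat7$*0$\gamma_0$*]; $Q_{0,1}$: [.*d0*], [4$\hat4$*5.*], [4$\hat4$*0$\beta_0$*], [5$\hat5$*], [5$\hat5$*4.*], [5$\hat5$*1$\beta_0$*], [5$\hat5$*2$\gamma_0$*], [$\beta_0$*]; $Q_{1,0}$: [.*d0*], [2$\hat2$*3.*], [2$\hat2$*0$\alpha_0$*], [3$\hat3$*], [3$\hat3$*2.*], [3$\hat3$*1$\alpha_0$*], [3$\hat3$*4$\gamma_0$*], [$\alpha_0$*]; $Q_{1,1}$: [.*d0*], [0$\hat0$*], [0$\hat0$*1.*], [0$\hat0$*2$\alpha_0$*], [0$\hat0$*4$\beta_0$*], [1$\hat1$*0.*], [1$\hat1$*3$\alpha_0$*], [1$\hat1$*5$\beta_0$*], [1$\hat1$*6$\gamma_0$*], [$\alpha_0$*], [$\beta_0$*].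
   Context: For $\alpha,\beta,\gamma\in\mathbb{Z}_2^n$ (with $x=(x_0,\dots,x_{n-1})$, $x_0$ most significant) the octal word $\omega(\alpha,\beta,\gamma)\in\{0,\dots,7\}^n$ has symbols $\omega_i=4\alpha_i+2\beta_i+\gamma_i$; indices $0,\dots,7$ are identified with $\mathbb{Z}_2^3$ via $(p_0,p_1,p_2)\leftrightarrow4p_0+2p_1+p_2$, so $\oplus$ applies to them. $e_0,\dots,e_7$ are the standard basis row vectors of $\mathbb{Q}^8$. $A_0$ is $\frac14$ times the $8\times8$ matrix with rows $(4,0,0,1,0,1,1,0)$, $(0,0,0,1,0,1,0,0)$, $(0,0,0,1,0,0,1,0)$, $(0,0,0,1,0,0,0,0)$, $(0,0,0,0,0,1,1,0)$, $(0,0,0,0,0,1,0,0)$, $(0,0,0,0,0,0,1,0)$, $(0,\dots,0)$, and $(A_k)_{i,j}=(A_0)_{i\oplus k,j\oplus k}$. With $L_{0,0}=(1,1,0,0,0,0,0,0)$, $L_{0,1}=(0,0,1,1,0,0,0,0)$, $L_{1,0}=(0,0,0,0,1,1,0,0)$, $L_{1,1}=(0,0,0,0,0,0,1,1)$, $\mathrm{padp}_{a,b}(\alpha,\beta,\gamma)=L_{a,b}A_{\omega_0}\cdots A_{\omega_{n-1}}e_0^T$. Patterns: a pattern is written between [ (most significant end) and ] (least significant end), and a word satisfies it if the whole word $\omega_0\cdots\omega_{n-1}$ matches it as a regular expression, where each pattern symbol matches one octal symbol: a digit $t$ matches exactly $t$; '.' matches any symbol; d matches $1,2,4,7$; e matches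 $0,3,5,6$; $\hat t$ matches $t,t\oplus3,t\oplus5$; $\alpha_0$ matches $0,1,2,3$; $\beta_0$ matches $0,1,4,5$; $\gamma_0$ matches $0,2,4,6$; s* matches zero or more consecutive symbols each matched by s. *)

From mathcomp Require Import all_boot all_algebra.
Set Implicit Arguments. Unset Strict Implicit. Unset Printing Implicit Defensive.
Import GRing.Theory.
Local Open Scope ring_scope.

(* Octal symbols are elements of 'I_8; the index i <-> (p0,p1,p2) with
   i = 4 p0 + 2 p1 + p2, so bitwise xor on Z_2^3 is Nat.lxor on the values. *)
Definition ord8 (m : nat) : 'I_8 := Ordinal (ltn_pmod m (isT : (0 < 8)%N)).
Definition xor8 (i k : 'I_8) : 'I_8 := ord8 (Nat.lxor i k).

(* 4 * A_0 as a table of naturals (rows listed top to bottom) *)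
Definition A0rows : seq (seq nat) :=
  [:: [:: 4; 0; 0; 1; 0; 1; 1; 0];
      [:: 0; 0; 0; 1; 0; 1; 0; 0];
      [:: 0; 0; 0; 1; 0; 0; 1; 0];
      [:: 0; 0; 0; 1; 0; 0; 0; 0];
      [:: 0; 0; 0; 0; 0; 1; 1; 0];
      [:: 0; 0; 0; 0; 0; 1; 0; 0];
      [:: 0; 0; 0; 0; 0; 0; 1; 0];
      [:: 0; 0; 0; 0; 0; 0; 0; 0]].

Definition A0 : 'M[rat]_8 :=
  \matrix_(i < 8, j < 8) ((nth 0%N (nth [::] A0rows i) j)%:R / 4%:R).

Definition Amat (k : 'I_8) : 'M[rat]_8 :=
  \matrix_(i < 8, j < 8) A0 (xor8 i k) (xor8 j k).

Definition Lvec (a b : bool) : 'rV[rat]_8 :=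
  \row_(j < 8) (if j./2 == (2 * a + b)%N then 1 else 0).

Definition e0 : 'rV[rat]_8 := \row_(j < 8) (if j == 0%N :> nat then 1 else 0).

Definition omega (n : nat) (al be ga : n.-tuple bool) : seq 'I_8 :=
  mkseq (fun i => ord8 (4 * nth false al i + 2 * nth false be i
                          + nth false ga i)%N) n.

Definition padp (a b : bool) (n : nat) (al be ga : n.-tuple bool) : rat :=
  (Lvec a b *m (\big[mulmx/1%:M]_(k <- omega al be ga) Amat k) *m e0^T) 0 0.

Inductive item := One of pred 'I_8 | Star of pred 'I_8.

Fixpoint pmatch (p : seq item) (w : seq 'I_8) : bool :=
  match p with
  | [::] => w == [::]
  | One c :: p' => if w is x :: w' then c x && pmatch p' w' else false
  | Star c :: p' =>
      has (fun k => all c (take k w) && pmatch p' (drop k w)) (iota 0 (size w).+1)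
  end.

Definition cD (t : nat) : pred 'I_8 := fun x => val x == t.
Definition cAny : pred 'I_8 := predT.
Definition cd : pred 'I_8 := fun x => val x \in [:: 1; 2; 4; 7]%N.
Definition ce : pred 'I_8 := fun x => val x \in [:: 0; 3; 5; 6]%N.
Definition chat (t : 'I_8) : pred 'I_8 :=
  fun x => [|| x == t, x == xor8 t (ord8 3) | x == xor8 t (ord8 5)].
Definition calpha0 : pred 'I_8 := fun x => val x \in [:: 0; 1; 2; 3]%N.
Definition cbeta0  : pred 'I_8 := fun x => val x \in [:: 0; 1; 4; 5]%N.
Definition cgamma0 : pred 'I_8 := fun x => val x \in [:: 0; 2; 4; 6]%N.

Definition dig (t : nat) := One (cD t).
Definition hatS (t : nat) := Star (chat (ord8 t)).

Definition P_d0 : seq item := [:: Star cAny; One cd; Star (cD 0)].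

Definition Q (a b : bool) : seq (seq item) :=
  match a, b with
  | false, false =>
      [:: P_d0;
          [:: dig 6; hatS 6; dig 7; Star cAny];
          [:: dig 7; hatS 7; dig 6; Star cAny];
          [:: dig 7; hatS 7; dig 0; Star cgamma0]]
  | false, true =>
      [:: P_d0;
          [:: dig 4; hatS 4; dig 5; Star cAny];
          [:: dig 4; hatS 4; dig 0; Star cbeta0];
          [:: dig 5; hatS 5];
          [:: dig 5; hatS 5; dig 4; Star cAny];
          [:: dig 5; hatS 5; dig 1; Star cbeta0];
          [:: dig 5; hatS 5; dig 2; Star cgamma0];
          [:: Star cbeta0]]
  | true, false =>
      [:: P_d0;
          [:: dig 2; hatS 2; dig 3; Star cAny];
          [:: dig 2; hatS 2; dig 0; Star calpha0];
          [:: dig 3; hatS 3];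
          [:: dig 3; hatS 3; dig 2; Star cAny];
          [:: dig 3; hatS 3; dig 1; Star calpha0];
          [:: dig 3; hatS 3; dig 4; Star cgamma0];
          [:: Star calpha0]]
  | true, true =>
      [:: P_d0;
          [:: dig 0; hatS 0];
          [:: dig 0; hatS 0; dig 1; Star cAny];
          [:: dig 0; hatS 0; dig 2; Star calpha0];
          [:: dig 0; hatS 0; dig 4; Star cbeta0];
          [:: dig 1; hatS 1; dig 0; Star cAny];
          [:: dig 1; hatS 1; dig 3; Star calpha0];
          [:: dig 1; hatS 1; dig 5; Star cbeta0];
          [:: dig 1; hatS 1; dig 6; Star cgamma0];
          [:: Star calpha0];
          [:: Star cbeta0]]
  end.

Definition satisfies_some (ps : seq (seq item)) (w : seq 'I_8) : bool :=
  has (fun p => pmatch p w) ps.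

From mathcomp Require Import all_boot all_algebra.
Set Implicit Arguments. Unset Strict Implicit. Unset Printing Implicit Defensive.
Import GRing.Theory Num.Theory.
Local Open Scope ring_scope.

(* Every A_k and every L_{a,b} is entrywise nonnegative, so no cancellation
   occurs: whether padp vanishes depends only on the zero pattern of the row
   vector L_{a,b} A_{w_0} ... A_{w_j}, which evolves by a deterministic
   automaton on subsets of {0, ..., 7}.  The pattern lists Q_{a,b} are
   recognised by the automaton on sets of positions inside the patterns.  Both
   automata accept the same words, because the finitely many states reachable
   in their product form a transition-closed set on which the two acceptance
   conditions agree; this is checked by computation. *)

Section StepClosed.
Variables (S A : eqType) (step : S -> A -> S) (letters : seq A).
Hypothesis mem_letters : forall x, x \in letters.

Definition step_closed (R : seq S) :=
  all (fun s => all (fun x => step s x \in R) letters) R.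

Lemma step_closed_eq_lang (L1 L2 : S -> seq A -> bool) (R : seq S) :
    (forall s x w, L1 s (x :: w) = L1 (step s x) w) ->
    (forall s x w, L2 s (x :: w) = L2 (step s x) w) ->
    step_closed R -> {in R, forall s, L1 s [::] = L2 s [::]} ->
  {in R, forall s w, L1 s w = L2 s w}.
Proof.
move=> L1_cons L2_cons /allP closedR eq_nil s Rs w.
elim: w s Rs => [|x w IHw] s Rs; first exact: eq_nil.
rewrite L1_cons L2_cons IHw //.
by have /allP := closedR s Rs; apply.
Qed.

End StepClosed.

Section NonnegativeSupport.
Variable R : numDomainType.

Lemma mulmx_nneg_neq0 m n p (u : 'M[R]_(m, n)) (v : 'M[R]_(n, p)) i k :
    u \is a mxOver Num.nneg -> v \is a mxOver Num.nneg ->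
  ((u *m v) i k != 0) = [exists j, (u i j != 0) && (v j k != 0)].
Proof.
move=> /mxOverP u_ge0 /mxOverP v_ge0; rewrite mxE psumr_eq0; last first.
  by move=> j _; rewrite mulr_ge0 // -nnegrE.
rewrite -has_predC; apply/hasP/existsP => [[j _]|[j nz_uv]].
  by rewrite /= mulf_eq0 negb_or; exists j.
by exists j; rewrite ?mem_index_enum //= mulf_eq0 negb_or.
Qed.

Definition row_supp n (u : 'rV[R]_n.+1) : seq bool :=
  mkseq (fun j => u 0 (inord j) != 0) n.+1.

Lemma nth_row_supp n (u : 'rV[R]_n.+1) (j : 'I_n.+1) :
  nth false (row_supp u) j = (u 0 j != 0).
Proof. by rewrite nth_mkseq // inord_val. Qed.

Definition supp_step (M : nat -> nat -> bool) (s : seq bool) : seq bool :=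
  mkseq (fun j => has (fun i => nth false s i && M i j) (iota 0 (size s))) (size s).

Lemma row_supp_mul n (u : 'rV[R]_n.+1) (M : 'M[R]_n.+1) (S : nat -> nat -> bool) :
    u \is a mxOver Num.nneg -> M \is a mxOver Num.nneg ->
    (forall i j : 'I_n.+1, (M i j != 0) = S i j) ->
  row_supp (u *m M) = supp_step S (row_supp u).
Proof.
move=> u_ge0 M_ge0 suppM; apply: (@eq_from_nth _ false); rewrite !size_mkseq //.
move=> j lt_j_n; rewrite /supp_step size_mkseq (nth_mkseq _ _ lt_j_n).
rewrite -[j]/(nat_of_ord (Ordinal lt_j_n)) nth_row_supp mulmx_nneg_neq0 //.
rewrite -val_enum_ord has_map.
apply/existsP/hasP => [[i /andP[nz_u nz_M]]|[i _ /andP[nz_u S_ij]]].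
  by exists i; rewrite ?mem_enum //= nth_row_supp nz_u; rewrite suppM in nz_M.
by exists i; rewrite -nth_row_supp nz_u suppM.
Qed.

End NonnegativeSupport.

Definition A0_supp (i j : nat) : bool := nth 0%N (nth [::] A0rows i) j != 0%N.

Definition Amat_supp (k : nat) (i j : nat) : bool :=
  A0_supp (Nat.lxor i k %% 8) (Nat.lxor j k %% 8).

Lemma Amat_nneg k : Amat k \is a mxOver Num.nneg.
Proof. by apply/mxOverP => i j; rewrite !mxE nnegrE divr_ge0 ?ler0n. Qed.

Lemma Amat_neq0 k i j : (Amat k i j != 0) = Amat_supp k i j.
Proof. by rewrite !mxE mulf_eq0 invr_eq0 !pnatr_eq0 orbF. Qed.

Definition supp_run (s : seq bool) (w : seq 'I_8) : seq bool :=
  foldl (fun s (k : 'I_8) => supp_step (Amat_supp k) s) s w.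

Lemma row_supp_Amat_prod (u : 'rV[rat]_8) w : u \is a mxOver Num.nneg ->
  row_supp (u *m \big[mulmx/1%:M]_(k <- w) Amat k) = supp_run (row_supp u) w.
Proof.
elim: w u => [|k w IHw] u u_ge0; first by rewrite big_nil mulmx1.
rewrite big_cons mulmxA IHw ?mxOverM ?Amat_nneg //=.
by rewrite (row_supp_mul _ _ (Amat_neq0 k)) ?Amat_nneg.
Qed.

Lemma mulmx_e0_tr (v : 'rV[rat]_8) : (v *m e0^T) 0 0 = v 0 0.
Proof.
rewrite mxE (bigD1 0) //= big1 ?addr0 => [|j nz_j]; rewrite !mxE ?mulr1 //.
by rewrite ifN ?mulr0; last exact: nz_j.
Qed.

Definition Lvec_supp (a b : bool) : seq bool := mkseq (fun j => j./2 == (2 * a + b)%N) 8.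

Lemma row_supp_Lvec a b : row_supp (Lvec a b) = Lvec_supp a b.
Proof.
apply: (@eq_from_nth _ false); rewrite !size_mkseq // => j lt_j_8.
rewrite !nth_mkseq // mxE inordK //.
by case: ifP; rewrite ?oner_eq0 ?eqxx.
Qed.

Lemma Lvec_nneg a b : Lvec a b \is a mxOver Num.nneg.
Proof. by apply/mxOverP => i j; rewrite mxE; case: ifP. Qed.

Lemma padp_eq0 a b n (al be ga : n.-tuple bool) :
  (padp a b al be ga == 0) = ~~ nth false (supp_run (Lvec_supp a b) (omega al be ga)) 0.
Proof.
rewrite /padp mulmx_e0_tr -row_supp_Lvec -row_supp_Amat_prod ?Lvec_nneg //.
by rewrite (nth_row_supp _ 0) negbK.
Qed.

Lemma pmatch_star_cons c p x w :
  pmatch (Star c :: p) (x :: w) = c x && pmatch (Star c :: p) w || pmatch p (x :: w).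
Proof.
have iota_cons : iota 0 (size w).+2 = 0%N :: map (addn 1) (iota 0 (size w).+1).
  by rewrite -iotaDl.
transitivity
  (has (fun k => all c (take k (x :: w)) && pmatch p (drop k (x :: w))) (iota 0 (size w).+2)).
  by [].
rewrite iota_cons -(cat1s 0%N) has_cat has_map orbC; congr (_ || _); last by rewrite /= orbF.
by case cx: (c x); [apply: eq_has => k | apply/hasPn => k _]; rewrite /preim /= cx.
Qed.

Fixpoint deriv_offsets (q : seq item) (k : nat) (x : 'I_8) : seq nat :=
  match q with
  | [::] => [::]
  | One c :: _ => if c x then [:: k.+1] else [::]
  | Star c :: q' => (if c x then [:: k] else [::]) ++ deriv_offsets q' k.+1 x
  end.

Lemma pmatch_drop_cons P k x w :
  pmatch (drop k P) (x :: w) =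
  has (fun j => pmatch (drop j P) w) (deriv_offsets (drop k P) k x).
Proof.
move Eq: (drop k P) => q; elim: q k Eq => [|[c|c] q IHq] k Pk //.
all: have Pk1 : drop k.+1 P = q by rewrite -add1n -drop_drop Pk drop1.
  by rewrite /=; case: (c x); rewrite /= ?Pk1 ?orbF.
rewrite pmatch_star_cons [deriv_offsets _ _ _]/= has_cat -(IHq _ Pk1).
by case: (c x); rewrite //= Pk orbF.
Qed.

Section Positions.
Variable Qs : seq (seq item).

Definition pos_pattern (ik : nat * nat) : seq item := drop ik.2 (nth [::] Qs ik.1).

Definition pos_match (P : seq (nat * nat)) (w : seq 'I_8) : bool :=
  has (fun ik => pmatch (pos_pattern ik) w) P.

Definition lex_leq (ik jl : nat * nat) : bool :=
  (ik.1 < jl.1)%N || (ik.1 == jl.1) && (ik.2 <= jl.2)%N.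

(* Normalising by sorting and removing duplicates keeps the reachable
   position sets finite. *)
Definition pos_step (P : seq (nat * nat)) (x : 'I_8) : seq (nat * nat) :=
  undup (sort lex_leq
    (flatten [seq [seq (ik.1, j) | j <- deriv_offsets (pos_pattern ik) ik.2 x] | ik <- P])).

Lemma pos_match_step P x w : pos_match (pos_step P x) w = pos_match P (x :: w).
Proof.
rewrite /pos_match (eq_has_r (fun ik => mem_undup _ ik)) (eq_has_r (mem_sort _ _)).
elim: P => [|ik P IHP] //=; rewrite has_cat IHP has_map.
by rewrite [in RHS]/pos_pattern pmatch_drop_cons.
Qed.

Definition pos_init : seq (nat * nat) := [seq (i, 0%N) | i <- iota 0 (size Qs)].

Lemma pos_match_init w : pos_match pos_init w = satisfies_some Qs w.
Proof.
rewrite /pos_match has_map /satisfies_some -[in RHS](mkseq_nth [::] Qs) has_map.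
by apply: eq_has => i; rewrite /= /pos_pattern drop0.
Qed.

End Positions.

Definition letters8 : seq 'I_8 := [seq ord8 i | i <- iota 0 8].

Lemma mem_letters8 x : x \in letters8.
Proof.
apply/mapP; exists (val x); first by rewrite mem_iota ltn_ord.
by apply: val_inj; rewrite /= modn_small.
Qed.

Definition pair_state := (seq bool * seq (nat * nat))%type.

Definition pair_step Qs (st : pair_state) (x : 'I_8) : pair_state :=
  (supp_step (Amat_supp x) st.1, pos_step Qs st.2 x).

Definition certified Qs (init : pair_state) (R : seq pair_state) : bool :=
  [&& init \in R, step_closed (pair_step Qs) letters8 R
    & all (fun st => ~~ nth false st.1 0 == pos_match Qs st.2 [::]) R].

Lemma certified_lang Qs s P R : certified Qs (s, P) R ->
  forall w, ~~ nth false (supp_run s w) 0 = pos_match Qs P w.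
Proof.
case/and3P => init_R closedR /allP nilR w.
pose L1 (st : pair_state) w := ~~ nth false (supp_run st.1 w) 0.
pose L2 (st : pair_state) w := pos_match Qs st.2 w.
apply: (step_closed_eq_lang mem_letters8 (L1 := L1) (L2 := L2) _ _ closedR _ init_R) => //.
- by move=> st x w'; rewrite /L2 pos_match_step.
- by move=> st /nilR /eqP.
Qed.

(* [explore] is a plain breadth-first search and needs no correctness proof:
   [reachable_certified] checks its output. *)
Fixpoint explore Qs (fuel : nat) (todo seen : seq pair_state) : seq pair_state :=
  if fuel is fuel'.+1 then
    if todo is st :: todo' then
      let new := [seq st' <- undup [seq pair_step Qs st x | x <- letters8] | st' \notin seen] in
      explore Qs fuel' (new ++ todo') (new ++ seen)
    else seen
  else seen.

Definition init_state a b : pair_state := (Lvec_supp a b, pos_init (Q a b)).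

Definition reachable a b : seq pair_state :=
  explore (Q a b) 200 [:: init_state a b] [:: init_state a b].

Lemma reachable_certified a b : certified (Q a b) (init_state a b) (reachable a b).
Proof. by case: a; case: b; vm_compute. Qed.

Theorem theorem8 (n : nat) (al be ga : n.-tuple bool) (a b : bool) :
  padp a b al be ga = 0 <-> satisfies_some (Q a b) (omega al be ga).
Proof.
have /certified_lang certR := reachable_certified a b.
rewrite -pos_match_init -certR -padp_eq0.
by split=> /eqP.
Qed.
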